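(* Let $L$ and $R$ be finite sets of edges (2-subsets of $[n]$) such that there are no $\{l_1<l_2\}\in L$ and $\{r_1<r_2\}\in R$ with $r_1<l_1<r_2<l_2$. For an edge $e=\{v_1<v_2\}$ consider: (Le) there is no $\{l_1<l_2\}\in L$ with $v_1<l_1<v_2<l_2$; (Re) there is no $\{r_1<r_2\}\in R$ with $r_1<v_1<r_2<v_2$. Let $V\subseteq[n]$ with $|V|\ge3$ be such that every edge of the convex polygon $P=\mathrm{conv}(V)$ satisfies (Le) and (Re). Then there is a triangulation $T$ of $P$ with vertices in $V$ every edge of which satisfies (Le) and (Re).
   Context: $\gamma_2=\{(t,t^2):t\in\mathbb{R}\}$. Fix $t_1<\dots<t_n$ and identify $\gamma_2(t_i)$ with $i\in[n]$; $P=\mathrm{conv}\{\gamma_2(t_i):i\in V\}$. $L$ and $R$ may intersect or be empty. *)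

(* Points gamma_2(t_1),...,gamma_2(t_n) on the parabola,
   with t_1 < ... < t_n, are identified with their indices in 'I_n.
   An edge {v1 < v2} is represented as a pair (v1, v2) with v1 < v2. *)
From mathcomp Require Import all_boot all_order.
Set Implicit Arguments. Unset Strict Implicit. Unset Printing Implicit Defensive.

Section Defs.
Variable n : nat.
Notation edge := ('I_n * 'I_n)%type.

Definition is_edge (e : edge) : bool := (e.1 < e.2)%N.

Definition edge_in (V : {set 'I_n}) (e : edge) : bool :=
  [&& is_edge e, e.1 \in V & e.2 \in V].

Definition condL (L : {set edge}) (e : edge) : bool :=
  ~~ [exists l in L, [&& (e.1 < l.1)%N, (l.1 < e.2)%N & (e.2 < l.2)%N]].

Definition condR (R : {set edge}) (e : edge) : bool :=
  ~~ [exists r in R, [&& (r.1 < e.1)%N, (e.1 < r.2)%N & (r.2 < e.2)%N]].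

Definition LR_compatible (L R : {set edge}) : bool :=
  ~~ [exists l in L, exists r in R,
        [&& (r.1 < l.1)%N, (l.1 < r.2)%N & (r.2 < l.2)%N]].

(* Points on the parabola are in convex position; {a<b} with a,b in V is an
   edge of P = conv(V) iff all other points of V lie on one side of the line
   through a and b, i.e. all lie strictly between a and b or all lie outside. *)
Definition polygon_edge (V : {set 'I_n}) (e : edge) : bool :=
  edge_in V e &&
  ([forall c in V, (e.1 <= c <= e.2)%N] ||
   [forall c in V, (c <= e.1)%N || (e.2 <= c)%N]).

(* For points in convex position (on the parabola), the open segments
   [a,b] and [c,d] (a<b, c<d) cross iff their endpoints interleave. *)
Definition cross (e f : edge) : bool :=
  [&& (e.1 < f.1)%N, (f.1 < e.2)%N & (e.2 < f.2)%N] ||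
  [&& (f.1 < e.1)%N, (e.1 < f.2)%N & (f.2 < e.2)%N].

(* The edge set of a triangulation of the convex polygon conv(V) with vertices
   in V: a maximal set of pairwise non-crossing segments between points of V. *)
Definition triangulation_edges (V : {set 'I_n}) (T : {set edge}) : Prop :=
  [/\ {in T, forall e, edge_in V e},
      {in T &, forall e f, ~~ cross e f} &
      forall e, edge_in V e -> e \notin T -> exists2 f, f \in T & cross e f].

End Defs.

From mathcomp Require Import all_boot all_order zify.
Set Implicit Arguments. Unset Strict Implicit. Unset Printing Implicit Defensive.

(* An ear of V is a triple u < v < w of consecutive
   vertices; its sides uv and vw are edges of P, and cutting it off leaves a
   polygon whose only new edge is uw.  So it suffices to find an ear whose
   chord uw satisfies (Le) and (Re), then add uv and vw to a triangulation of
   V \ v.  Checking (Le) and (Re) on uv, vw and on the hull edge of P shows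
   that a bad chord uw is blocked either by some l = {v < l2} in L with
   w < l2, or by some r = {r1 < v} in R with r1 < u.  The ear at the minimum
   of V cannot be blocked from R, so some l in L is blocking; at the blocking
   l with the largest l1 the ear starting at l1 is admissible: a block from L
   would start further right, and a block r from R would satisfy
   r1 < l1 < r2 < l2, which the compatibility of L and R forbids. *)

Section Conditions.
Variable n : nat.
Implicit Types (L R : {set 'I_n * 'I_n}) (e l r : 'I_n * 'I_n).

Definition admissible L R e := condL L e && condR R e.

Lemma condLPn L e :
  reflect (exists2 l, l \in L & [&& e.1 < l.1, l.1 < e.2 & e.2 < l.2])
          (~~ condL L e).
Proof. by rewrite negbK; apply: exists_inP. Qed.

Lemma condRPn R e :
  reflect (exists2 r, r \in R & [&& r.1 < e.1, e.1 < r.2 & r.2 < e.2])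
          (~~ condR R e).
Proof. by rewrite negbK; apply: exists_inP. Qed.

Lemma condL_false L e l : condL L e -> l \in L ->
  e.1 < l.1 -> l.1 < e.2 -> e.2 < l.2 -> False.
Proof.
by move=> Le lL *; move: Le; apply/negP/condLPn; exists l => //; apply/and3P.
Qed.

Lemma condR_false R e r : condR R e -> r \in R ->
  r.1 < e.1 -> e.1 < r.2 -> r.2 < e.2 -> False.
Proof.
by move=> Re rR *; move: Re; apply/negP/condRPn; exists r => //; apply/and3P.
Qed.

Lemma LR_compatible_false L R l r : LR_compatible L R -> l \in L -> r \in R ->
  r.1 < l.1 -> l.1 < r.2 -> r.2 < l.2 -> False.
Proof.
move=> /negP LRc lL rR *; apply: LRc; apply/exists_inP; exists l => //.
by apply/exists_inP; exists r => //; apply/and3P.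
Qed.

Lemma crossC e f : cross e f = cross f e.
Proof. by rewrite /cross orbC. Qed.

End Conditions.

Lemma edge_in_subset n (A B : {set 'I_n}) e : A \subset B -> edge_in A e -> edge_in B e.
Proof.
by move=> /subsetP AB /and3P[e12 e1A e2A]; apply/and3P; split=> //; apply: AB.
Qed.

Section Polygon.
Variables (n : nat) (V : {set 'I_n}).
Implicit Types (e f : 'I_n * 'I_n) (T : {set 'I_n * 'I_n}).

Lemma polygon_edge_edge_in e : polygon_edge V e -> edge_in V e.
Proof. by case/andP. Qed.

Lemma polygon_edge_noncross e f : polygon_edge V e -> edge_in V f -> ~~ cross e f.
Proof.
case/andP=> /and3P[+ _ _] Ve /and3P[+ f1V f2V]; rewrite /is_edge /cross.
by case/orP: Ve => /forall_inP Ve; have := Ve _ f1V; have := Ve _ f2V; lia.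
Qed.

Lemma polygon_edge_in_triangulation T e :
  triangulation_edges V T -> polygon_edge V e -> e \in T.
Proof.
case=> TV _ Tmax Pe; apply: contraT => eNT.
have [f fT] := Tmax e (polygon_edge_edge_in Pe) eNT.
by rewrite (negbTE (polygon_edge_noncross Pe (TV f fT))).
Qed.

Lemma noncross_setU1 e T : polygon_edge V e -> {in T, forall f, edge_in V f} ->
  {in T &, forall f g, ~~ cross f g} -> {in e |: T &, forall f g, ~~ cross f g}.
Proof.
move=> Pe TV Tnc f g /setU1P[->|fT] /setU1P[->|gT]; last exact: Tnc.
- exact: polygon_edge_noncross Pe (polygon_edge_edge_in Pe).
- exact: polygon_edge_noncross Pe (TV g gT).
- by rewrite crossC; apply: polygon_edge_noncross Pe (TV f fT).
Qed.

Lemma small_polygon_edge e : #|V| <= 3 -> edge_in V e -> polygon_edge V e.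
Proof.
move=> V3 Ve; rewrite /polygon_edge Ve /=; apply: contraTT V3 => /norP[].
move=> /forall_inPn[c cV c_out] /forall_inPn[d dV d_in].
have sV : [:: e.1; e.2; c; d] \subset V.
  by case/and3P: Ve => _ e1V e2V; apply/subsetP => x; rewrite !inE => /or4P[] /eqP->.
have /card_uniqP s4 : uniq [:: e.1; e.2; c; d].
  by case/and3P: Ve; rewrite /is_edge /= !inE -!val_eqE /=; lia.
by rewrite -ltnNge; have := subset_leq_card sV; rewrite s4.
Qed.

Lemma triangulation_small : #|V| <= 3 -> triangulation_edges V [set e | edge_in V e].
Proof.
move=> V3; split=> [e|e f|e Ve]; rewrite ?inE //.
  by move=> /(small_polygon_edge V3) Pe; apply: polygon_edge_noncross.
by rewrite Ve.
Qed.

End Polygon.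

Section Ear.
Variables (n : nat) (V : {set 'I_n}).

Definition ear (u v w : 'I_n) : Prop :=
  [/\ u \in V, v \in V, w \in V, u < v < w &
      forall c, c \in V -> ~~ ((u < c < v) || (v < c < w))].

Lemma ear_from x c d : x \in V -> c \in V -> d \in V -> x < c < d ->
  exists v w, ear x v w /\ v <= c.
Proof.
move=> xV cV dV /andP[xc cd].
have [|v /andP[vV xv] vmin] := @arg_minnP _ c (fun y => (y \in V) && (x < y)) val.
  by rewrite cV xc.
have vc : v <= c by apply: vmin; rewrite cV xc.
have [|w /andP[wV vw] wmin] := @arg_minnP _ d (fun y => (y \in V) && (v < y)) val.
  by rewrite dV; lia.
exists v, w; split => //; split => //; first by rewrite xv vw.
move=> y yV; have := vmin y; have := wmin y; rewrite yV /=; lia.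
Qed.

Section CutEar.
Variables u v w : 'I_n.
Hypothesis earV : ear u v w.

Lemma ear_edgeL : polygon_edge V (u, v).
Proof.
case: earV => uV vV _ /andP[uv _] empty.
rewrite /polygon_edge /edge_in /is_edge /= uv uV vV; apply/orP; right.
by apply/forall_inP => c /empty; lia.
Qed.

Lemma ear_edgeR : polygon_edge V (v, w).
Proof.
case: earV => _ vV wV /andP[_ vw] empty.
rewrite /polygon_edge /edge_in /is_edge /= vw vV wV; apply/orP; right.
by apply/forall_inP => c /empty; lia.
Qed.

Lemma ear_chord : polygon_edge (V :\ v) (u, w).
Proof.
case: earV => uV _ wV uvw empty.
rewrite /polygon_edge /edge_in /is_edge /= !in_setD1 uV wV -!val_eqE /=.
apply/andP; split; first lia.
apply/orP; right; apply/forall_inP => c; rewrite in_setD1 -val_eqE.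
by case/andP=> /= cNv /empty; lia.
Qed.

Lemma polygon_edge_setD1 e :
  polygon_edge (V :\ v) e -> polygon_edge V e \/ e = (u, w).
Proof.
case: earV => uV _ wV /andP[uv vw] empty.
have uwV' : (u \in V :\ v) && (w \in V :\ v).
  by rewrite !in_setD1 uV wV -!val_eqE /= !neq_ltn uv vw orbT.
case: e => x y /andP[/and3P[xy /setD1P[xNv xV] /setD1P[yNv yV]] side].
rewrite /polygon_edge /edge_in {}xy xV yV /=.
case/orP: side => /forall_inP side; move: uwV' => /andP[/side /= Su /side /= Sw].
  left; apply/orP; left; apply/forall_inP => c cV.
  have [->|cNv] := eqVneq c v; first lia.
  by apply: side; rewrite in_setD1 cNv.
have [/andP[xv vy]|v_out] := boolP ((x < v) && (v < y)).
  right; have := empty x xV; have := empty y yV => *.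
  by congr pair; apply: val_inj => /=; lia.
left; apply/orP; right; apply/forall_inP => c cV.
have [->|cNv] := eqVneq c v; first lia.
by apply: side; rewrite in_setD1 cNv.
Qed.

Lemma ear_spoke_cross e : edge_in V e -> (e.1 == v) || (e.2 == v) ->
  e != (u, v) -> e != (v, w) -> cross e (u, w).
Proof.
case: earV => _ _ _ uvw empty; case: e => x y /and3P[xy /= xV yV].
rewrite /is_edge /cross /= -!pair_eqE /= -!val_eqE /= in xy *.
by have := empty _ xV; have := empty _ yV; lia.
Qed.

Lemma triangulation_add_ear T : triangulation_edges (V :\ v) T ->
  triangulation_edges V ((u, v) |: ((v, w) |: T)).
Proof.
move=> Ttri; have uwT := polygon_edge_in_triangulation Ttri ear_chord.
case: Ttri => TV Tnc Tmax.
have TV' : {in T, forall f, edge_in V f}.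
  by move=> f /TV; apply: edge_in_subset (subD1set V v).
have TwV : {in (v, w) |: T, forall f, edge_in V f}.
  by move=> f /setU1P[->|/TV' //]; apply: polygon_edge_edge_in ear_edgeR.
split.
- by move=> f /setU1P[->|/TwV //]; apply: polygon_edge_edge_in ear_edgeL.
- exact: noncross_setU1 ear_edgeL TwV (noncross_setU1 ear_edgeR TV' Tnc).
move=> f Vf; rewrite !inE => /norP[fNuv /norP[fNvw fNT]].
have [fv|fNv] := boolP ((f.1 == v) || (f.2 == v)).
  by exists (u, w); [rewrite !inE uwT !orbT | apply: ear_spoke_cross].
have [|g gT fg] := Tmax f _ fNT; last by exists g; rewrite ?inE ?gT ?orbT.
case/and3P: Vf => f12 f1V f2V; case/norP: fNv => f1Nv f2Nv.
by apply/and3P; rewrite !in_setD1 f1Nv f2Nv f1V f2V.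
Qed.

End CutEar.
End Ear.

Section GoodEar.
Variables (n : nat) (L R : {set 'I_n * 'I_n}) (V : {set 'I_n}) (mn mx : 'I_n).
Hypothesis LRc : LR_compatible L R.
Hypothesis Vadm : forall e, polygon_edge V e -> admissible L R e.
Hypotheses (mnV : mn \in V) (mxV : mx \in V) (mn_lt_mx : mn < mx).
Hypothesis V_mnmx : forall c, c \in V -> mn <= c <= mx.

Lemma hull_admissible : admissible L R (mn, mx).
Proof.
apply: Vadm; rewrite /polygon_edge /edge_in /is_edge /= mnV mxV mn_lt_mx /=.
by apply/orP; left; apply/forall_inP.
Qed.

Lemma inadmissible_ear u v w : ear V u v w -> ~~ admissible L R (u, w) ->
  (exists2 l, l \in L & [&& l.1 == v, w < l.2 & l.2 <= mx]) \/
  (exists2 r, r \in R & (r.2 == v) && (r.1 < u)).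
Proof.
move=> earV; have /andP[uvL uvR] := Vadm (ear_edgeL earV).
have /andP[vwL vwR] := Vadm (ear_edgeR earV).
have /andP[hullL _] := hull_admissible.
case: earV => uV _ wV /andP[uv vw] _.
have /andP[mnu _] := V_mnmx uV; have /andP[_ wmx] := V_mnmx wV.
rewrite negb_and => /orP[/condLPn[[l1 l2] lL] | /condRPn[[r1 r2] rR]] /and3P/= [].
- move=> ul lw wl; left; exists (l1, l2); rewrite //= wl -val_eqE /=.
  case: (ltngtP l1 v) => [lv|vl|_] /=.
  + by case: (condL_false uvL lL ul lv (ltn_trans vw wl)).
  + by case: (condL_false vwL lL vl lw wl).
  rewrite leqNgt; apply/negP => mxl.
  exact: (condL_false hullL lL (leq_ltn_trans mnu ul) (leq_trans lw wmx) mxl).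
- move=> ru ur rw; right; exists (r1, r2); rewrite //= ru andbT -val_eqE /=.
  case: (ltngtP r2 v) => [rv|vr|//].
  + by case: (condR_false uvR rR ru ur rv).
  + by case: (condR_false vwR rR (ltn_trans ru uv) vr rw).
Qed.

Definition blocking (l : 'I_n * 'I_n) : bool :=
  [&& l \in L, l.1 \in V, [exists c in V, l.1 < c < l.2] & l.2 <= mx].

Lemma ear_at_min_blocked v w : ear V mn v w -> ~~ admissible L R (mn, w) ->
  exists l, blocking l.
Proof.
move=> earV; case: (earV) => _ vV wV /andP[mnv vw] _.
case/(inadmissible_ear earV) => [[[l1 l2] lL]|[[r1 r2] rR]] /=.
  case/and3P=> /eqP lv wl lmx; subst l1; exists (v, l2).
  by rewrite /blocking lL vV lmx andbT; apply/exists_inP; exists w; rewrite // vw.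
case/andP=> /eqP rv rmn; subst r2.
have /andP[_ hullR] := hull_admissible; have /andP[_ wmx] := V_mnmx wV.
by case: (condR_false hullR rR rmn mnv (leq_trans vw wmx)).
Qed.

Lemma blocked_good_ear : (exists l, blocking l) ->
  exists u v w, ear V u v w /\ admissible L R (u, w).
Proof.
case=> l0 /(arg_maxnP (fun l => val l.1)) [[m1 m2]].
case/and4P=> /= mL m1V /exists_inP[c cV /andP[m1c cm2]] m2mx mmax.
have [|v [w [earV vc]]] := ear_from m1V cV mxV.
  by rewrite m1c (leq_trans cm2 m2mx).
have [adm|] := boolP (admissible L R (m1, w)); first by exists m1, v, w.
case: (earV) => _ vV wV /andP[m1v vw] _.
case/(inadmissible_ear earV) => [[[l1 l2] lL]|[[r1 r2] rR]] /=.
  case/and3P=> /eqP lv wl lmx; subst l1.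
  have: blocking (v, l2).
    by rewrite /blocking lL vV lmx andbT; apply/exists_inP; exists w; rewrite // vw.
  by move/mmax; rewrite leqNgt m1v.
case/andP=> /eqP rv rm; subst r2.
by case: (LR_compatible_false LRc mL rR rm m1v (leq_ltn_trans vc cm2)).
Qed.

End GoodEar.

Lemma good_ear_exists n (L R : {set 'I_n * 'I_n}) (V : {set 'I_n}) :
  LR_compatible L R -> 3 < #|V| ->
  (forall e, polygon_edge V e -> admissible L R e) ->
  exists u v w, ear V u v w /\ admissible L R (u, w).
Proof.
move=> LRc V4 Vadm.
have /card_gt0P[x0 x0V] : 0 < #|V| by apply: leq_trans V4.
case: (@arg_minnP _ x0 (fun x => x \in V) val x0V) => mn mnV mnmin.
case: (@arg_maxnP _ x0 (fun x => x \in V) val x0V) => mx mxV mxmax.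
have V_mnmx c : c \in V -> mn <= c <= mx by move=> cV; rewrite mnmin //; apply: mxmax.
have [c [d [cV dV cd]]] : exists c d, [/\ c \in V :\ mn, d \in V :\ mn & c < d].
  have /card_gt1P[x [y [xV yV xNy]]] : 1 < #|V :\ mn|.
    by move: V4; rewrite (cardsD1 mn V) mnV add1n ltnS => /ltnW.
  case: (ltngtP x y) => [xy|yx|/val_inj xy]; [by exists x, y|by exists y, x|].
  by rewrite xy eqxx in xNy.
move: cV dV; rewrite !in_setD1 => /andP[cNmn cV] /andP[_ dV].
have mnc : mn < c by rewrite ltn_neqAle val_eqE eq_sym cNmn mnmin.
have [|v [w [earV _]]] := ear_from mnV cV dV; first by rewrite mnc cd.
have mn_lt_mx : mn < mx.
  by case: earV => _ _ wV /andP[mnv vw] _; apply: ltn_trans mnv (leq_trans vw (mxmax w wV)).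
have [adm|nadm] := boolP (admissible L R (mn, w)); first by exists mn, v, w.
apply: (blocked_good_ear LRc Vadm mnV mxV mn_lt_mx V_mnmx).
exact: (ear_at_min_blocked Vadm mnV mxV mn_lt_mx V_mnmx earV nadm).
Qed.

Lemma admissible_triangulation_exists n (L R : {set 'I_n * 'I_n}) (V : {set 'I_n}) :
  LR_compatible L R -> 3 <= #|V| ->
  (forall e, polygon_edge V e -> admissible L R e) ->
  exists2 T, triangulation_edges V T & {in T, forall e, admissible L R e}.
Proof.
move=> LRc; move Hk: (#|V| - 3) => k; elim: k V Hk => [|k IH] V Vk V3 Vadm.
  have V_le3 : #|V| <= 3 by rewrite -subn_eq0 Vk.
  exists [set e | edge_in V e]; first exact: triangulation_small.
  by move=> e; rewrite inE => /(small_polygon_edge V_le3)/Vadm.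
have [|u [v [w [earV uw_adm]]]] := good_ear_exists LRc _ Vadm.
  by rewrite -subn_gt0 Vk.
have Vv : #|V| = (#|V :\ v|).+1 by case: earV => _ vV _ _ _; rewrite (cardsD1 v) vV.
have [|||T Ttri Tadm] := IH (V :\ v); [by lia|by lia| |].
  by move=> e /(polygon_edge_setD1 earV)[/Vadm //|->].
exists ((u, v) |: ((v, w) |: T)); first exact: triangulation_add_ear.
move=> e; rewrite !inE => /or3P[/eqP->|/eqP->|/Tadm //]; apply: Vadm.
  exact: ear_edgeL earV.
exact: ear_edgeR earV.
Qed.

Theorem proposition3p9 (n : nat) (L R : {set 'I_n * 'I_n}) (V : {set 'I_n}) :
  {in L, forall e, is_edge e} ->
  {in R, forall e, is_edge e} ->
  LR_compatible L R ->
  (3 <= #|V|)%N ->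
  (forall e, polygon_edge V e -> condL L e /\ condR R e) ->
  exists T : {set 'I_n * 'I_n},
    triangulation_edges V T /\ (forall e, e \in T -> condL L e /\ condR R e).
Proof.
move=> _ _ LRc V3 Vadm.
have [|T Ttri Tadm] := admissible_triangulation_exists LRc V3.
  by move=> e /Vadm[eL eR]; apply/andP.
by exists T; split=> // e /Tadm/andP.
Qed.
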